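(* Let $A$ be an $m$-dimensional permutation array of even order $n$ defined by a bijection $\varphi:[n_1]\times\cdots\times[n_{m-1}]\to[n_m]$. Let $E=\{i\in[m-1]: n_i\text{ is even}\}$ and $\theta=1-\prod_{i\in E}\frac{n_i-1}{n_i}$ (with $\theta=0$ if $E=\emptyset$). If $\theta<\frac{n-2}{2n}$, then there is an $n_1\times\cdots\times n_m$ window in the periodic extension of $A$ which has a repeated difference vector. In particular, if $A$ is an $m$-dimensional Costas array with $\theta<\frac{n-2}{2n}$, then $A$ is not periodic Costas.
   Context: For $n\in\mathbb{N}$, $[n]=\{1,\dots,n\}$; $m\ge2$, all $n_i\ge2$. A binary array $A:[n_1]\times\cdots\times[n_m]\to\{0,1\}$ is an $m$-dimensional permutation array if there exist $k$ with $1\le k<m$ and a bijection $\varphi:[n_1]\times\cdots\times[n_k]\to[n_{k+1}]\times\cdots\times[n_m]$ with $A(a_1,\dots,a_m)=1$ iff $\varphi(a_1,\dots,a_k)=(a_{k+1},\dots,a_m)$ (here $k=m-1$); points with value 1 are dots; the order is the number of dots, here $n=n_1\cdots n_{m-1}=n_m$. The periodic extension $\mathbb{A}:\mathbb{Z}^m\to\{0,1\}$ is $\mathbb{A}(a_1,\dots,a_m)=A(a_1',\dots,a_m')$ with $a_i'\in[n_i]$, $a_i'\equiv a_i\pmod{n_i}$; an $n_1\times\cdots\times n_m$ window is the restriction of $\mathbb{A}$ to a box $\prod_i\{k_i,\dots,k_i+n_i-1\}$, $k_i\in\mathbb{Z}$. The difference vector from dot $(a_i)$ to a distinct dot $(w_i)$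 is $\langle w_i-a_i\rangle_i$; a window has a repeated difference vector if two distinct ordered pairs of distinct dots in it have equal difference vectors. An $m$-dimensional Costas array is a permutation array with no repeated difference vector; it is periodic Costas if every $n_1\times\cdots\times n_m$ window of its periodic extension has no repeated difference vector. *)

From HB Require Import structures.
From mathcomp Require Import all_boot all_order all_algebra.
Set Implicit Arguments. Unset Strict Implicit. Unset Printing Implicit Defensive.
Import Order.TTheory GRing.Theory Num.Theory.
Local Open Scope ring_scope.

(* An m-dimensional array with m = k.+1 (k >= 1).  A point of Z^m is a pair
   (x, z) with x : the first k = m-1 coordinates and z : the last one.
   Coordinates are 0-indexed: [n_i] is represented by {0, ..., n_i - 1}. *)
Definition pt (k : nat) := ({ffun 'I_k -> int} * int)%type.

Definition in_box k (n : 'I_k -> nat) (nm : nat) (p : pt k) : bool :=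
  [forall i, (0 <= p.1 i) && (p.1 i < (n i)%:Z)] && (0 <= p.2) && (p.2 < nm%:Z).

(* A (binary array; only its values on the box matter) is the permutation
   array defined by the bijection phi : [n_1] x ... x [n_{m-1}] -> [n_m]. *)
Definition perm_array_by k (n : 'I_k -> nat) (nm : nat)
  (A : {ffun 'I_k -> int} -> int -> bool) (phi : {ffun 'I_k -> int} -> int) : Prop :=
  [/\ (forall x : {ffun 'I_k -> int}, [forall i, (0 <= x i) && (x i < (n i)%:Z)] ->
         (0 <= phi x) && (phi x < nm%:Z)),
      (forall x y : {ffun 'I_k -> int}, [forall i, (0 <= x i) && (x i < (n i)%:Z)] ->
         [forall i, (0 <= y i) && (y i < (n i)%:Z)] -> phi x = phi y -> x = y),
      (forall z, 0 <= z < nm%:Z -> exists2 x : {ffun 'I_k -> int},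
         [forall i, (0 <= x i) && (x i < (n i)%:Z)] & phi x = z) &
      (forall p : pt k, in_box n nm p -> A p.1 p.2 = (phi p.1 == p.2))].

Definition per_ext k (n : 'I_k -> nat) (nm : nat)
  (A : {ffun 'I_k -> int} -> int -> bool) (p : pt k) : bool :=
  A [ffun i => modz (p.1 i) (n i)%:Z] (modz p.2 nm%:Z).

Definition diffv k (p q : pt k) : pt k :=
  ([ffun i => q.1 i - p.1 i], q.2 - p.2).

Definition rep_diff k (S : pt k -> bool) : Prop :=
  exists p1 p2 p3 p4 : pt k,
    [/\ S p1, S p2, S p3 & S p4] /\
    [/\ p1 != p2, p3 != p4, (p1, p2) != (p3, p4) & diffv p1 p2 = diffv p3 p4].

Definition in_window k (n : 'I_k -> nat) (nm : nat) (b : {ffun 'I_k -> int}) (c : int)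
  (p : pt k) : bool :=
  [forall i, (b i <= p.1 i) && (p.1 i < b i + (n i)%:Z)] && (c <= p.2) && (p.2 < c + nm%:Z).

Definition window_dots k (n : 'I_k -> nat) (nm : nat)
  (A : {ffun 'I_k -> int} -> int -> bool) b c : pt k -> bool :=
  fun p => in_window n nm b c p && per_ext n nm A p.

Definition costas_dots k (n : 'I_k -> nat) (nm : nat)
  (A : {ffun 'I_k -> int} -> int -> bool) : Prop :=
  ~ rep_diff (fun p => in_box n nm p && A p.1 p.2).

Definition periodic_costas k (n : 'I_k -> nat) (nm : nat)
  (A : {ffun 'I_k -> int} -> int -> bool) : Prop :=
  forall b c, ~ rep_diff (window_dots n nm A b c).

Definition theta k (n : 'I_k -> nat) : rat :=
  1 - \prod_(i < k | ~~ odd (n i)) (((n i)%:R - 1) / (n i)%:R).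

From mathcomp Require Import all_boot all_order all_algebra zify ring lra.
Import Order.TTheory GRing.Theory Num.Theory.
(* Choose a coordinate i0 with n_i0 >= 3: the bound on theta only serves to
   exclude n_i = 2 for all i.
   Let x+ be x moved cyclically by one step in coordinate i0 and let the jump
   of x be phi(x+) - phi(x) mod n, a value in {1, ..., n - 1}.  There are n
   points and only n - 1 jumps, so two points x, y with phi x != phi y have the
   same jump, and the dot pairs (x, x+) and (y, y+) have difference vectors
   that agree modulo the periods.  Coordinatewise, the four dots can be moved
   by periods into one window while keeping the two difference vectors equal.
   The only obstruction is a jump of n/2 with phi y - phi x = +-n/2; it would
   force y = x+ and x = y+, impossible since n_i0 >= 3. *)

Set Implicit Arguments.
Unset Strict Implicit.
Unset Printing Implicit Defensive.
Local Open Scope ring_scope.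

Lemma modz_addMl_small (N a t : int) : 0 <= a < N -> ((a + N * t) %% N)%Z = a.
Proof. by move=> aN; rewrite addrC mulrC modzMDl modz_small. Qed.

Lemma modz_succ_cases (N u : int) : 0 <= u < N ->
  (u + 1 < N /\ ((u + 1) %% N)%Z = u + 1) \/ (u + 1 = N /\ ((u + 1) %% N)%Z = 0).
Proof.
move=> uN; have [lt_uN|ge_uN] := ltrP (u + 1) N.
  by left; rewrite modz_small //; lia.
right; have eq_uN : u + 1 = N by lia.
by rewrite eq_uN modzz.
Qed.

Definition lifts_in_window (N a a' r : int) : Prop :=
  exists u u' d c : int,
    [/\ (u %% N)%Z = a, (u' %% N)%Z = a', (d %% N)%Z = r, d != 0 &
        [/\ c <= u < c + N, c <= u + d < c + N, c <= u' < c + N & c <= u' + d < c + N]].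

Lemma lifts_in_window_sym (N a a' r : int) :
  lifts_in_window N a a' r -> lifts_in_window N a' a r.
Proof. by case=> u [u' [d [c [? ? ? ? [? ? ? ?]]]]]; exists u', u, d, c. Qed.

Lemma lifts_in_window_le (N a a' r : int) :
  0 <= a -> a <= a' -> a' < N -> 0 < r < N -> ~ (r * 2 = N /\ (a' - a) * 2 = N) ->
  lifts_in_window N a a' r.
Proof.
move=> a_ge0 le_aa' a'N rN not_half.
have [span_lt|span_ge] := lerP (a' - a + r) (N - 1).
  exists (a + N * 0), (a' + N * 0), (r + N * 0), a.
  by split; rewrite ?modz_addMl_small //; try split; lia.
have [span_gt|span_le] := lerP (N + 1) (a' - a + r).
  exists (a + N * 1), (a' + N * 0), (r + N * -1), (a' + r - N).
  by split; rewrite ?modz_addMl_small //; try split; lia.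
have [r_small|r_large] := ltrP (r * 2) N.
  exists (a + N * 1), (a' + N * 0), (r + N * 0), a'.
  by split; rewrite ?modz_addMl_small //; try split; lia.
have [r_big|r_half] := ltrP N (r * 2).
  exists (a + N * 0), (a' + N * 0), (r + N * -1), (a + r - N).
  by split; rewrite ?modz_addMl_small //; try split; lia.
by exfalso; apply: not_half; lia.
Qed.

Lemma lift_residues_in_window (N a a' r : int) :
  0 <= a < N -> 0 <= a' < N -> 0 < r < N -> ~ (r * 2 = N /\ `|a' - a| * 2 = N) ->
  lifts_in_window N a a' r.
Proof.
move=> aN a'N rN not_half; have [le_aa'|lt_a'a] := lerP a a'.
  apply: lifts_in_window_le; [lia | lia | lia | lia |].
  by move=> [? ?]; apply: not_half; lia.
apply/lifts_in_window_sym/lifts_in_window_le; [lia | lia | lia | lia |].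
by move=> [? ?]; apply: not_half; lia.
Qed.

Lemma half_turn (N a b j : int) :
  0 <= a < N -> 0 <= b < N -> j * 2 = N -> `|b - a| * 2 = N -> ((a + j) %% N)%Z = b.
Proof.
move=> aN bN jN abN; have [le_ab|lt_ba] := lerP a b.
  have -> : a + j = b + N * 0 by lia.
  exact: modz_addMl_small.
have -> : a + j = b + N * 1 by lia.
exact: modz_addMl_small.
Qed.

Lemma ord_fun_collision m (f : 'I_m -> 'I_m) (v : 'I_m) :
  (forall z, f z != v) -> exists z1 z2, z1 != z2 /\ f z1 = f z2.
Proof.
move=> f_miss.
have [/injectiveP f_inj|/injectivePn [z1 [z2 ne_z Ez]]] := boolP (injectiveb f).
  by have /codomP [z /esym/eqP] := injF_onto f_inj v; rewrite (negPf (f_miss z)).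
by exists z1, z2.
Qed.

Lemma theta_all_two k (n : 'I_k -> nat) :
  (forall i, n i = 2%N) -> theta n = 1 - ((\prod_(i < k) n i)%N%:R)^-1.
Proof.
move=> n2; rewrite /theta natr_prod -prodfV big_mkcond /=.
by congr (_ - _); apply: eq_bigr => i _; rewrite n2 /=; field.
Qed.

Lemma exists_dim_ge3_of_theta k (n : 'I_k -> nat) (nm : nat) :
  (forall i, 2 <= n i)%N -> nm = (\prod_(i < k) n i)%N ->
  theta n < (nm%:R - 2) / (2 * nm%:R) -> exists i, (3 <= n i)%N.
Proof.
move=> n_ge2 nmE; case: (boolP [exists i, 3 <= n i]%N) => [/existsP //|/existsPn n_le2].
have n2 i : n i = 2%N by have := n_le2 i; have := n_ge2 i; lia.
have nm_gt0 : (0 < nm)%N by rewrite nmE prodn_gt0 // => i; rewrite n2.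
rewrite theta_all_two // -nmE.
have -> : (nm%:R - 2) / (2 * nm%:R) = 2^-1 - (nm%:R)^-1 :> rat.
  by field; rewrite pnatr_eq0 -lt0n.
lra.
Qed.

Definition in_domain k (n : 'I_k -> nat) (x : {ffun 'I_k -> int}) : bool :=
  [forall i, (0 <= x i) && (x i < (n i)%:Z)].

Section JumpCollision.

Variables (k : nat) (n : 'I_k -> nat) (nm : nat).
Variables (A : {ffun 'I_k -> int} -> int -> bool) (phi : {ffun 'I_k -> int} -> int).
Variable i0 : 'I_k.
Hypothesis n_i0_ge3 : (3 <= n i0)%N.
Hypothesis nm_gt0 : (0 < nm)%N.
Hypothesis A_perm : perm_array_by n nm A phi.

Local Notation N := nm%:Z.
Local Notation n0 := (n i0)%:Z.

Lemma in_domainP x : in_domain n x -> forall i, 0 <= x i < (n i)%:Z.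
Proof. by move/forallP. Qed.

Lemma phi_range x : in_domain n x -> 0 <= phi x < N.
Proof. by case: A_perm => phi_bd _ _ _ /phi_bd. Qed.

Lemma phi_inj x y : in_domain n x -> in_domain n y -> phi x = phi y -> x = y.
Proof. by case: A_perm => _ phi_inj _ _; exact: phi_inj. Qed.

Definition step (x : {ffun 'I_k -> int}) : {ffun 'I_k -> int} :=
  [ffun i => if i == i0 then ((x i + 1) %% (n i)%:Z)%Z else x i].

Lemma step_i0 x : step x i0 = ((x i0 + 1) %% n0)%Z.
Proof. by rewrite ffunE eqxx. Qed.

Lemma step_in_domain x : in_domain n x -> in_domain n (step x).
Proof.
move=> Dx; apply/forallP => i; rewrite ffunE; case: eqP => [->|_]; last exact: in_domainP.
have x_i0 := in_domainP Dx i0.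
by have [[? ->]|[? ->]] := modz_succ_cases x_i0; lia.
Qed.

Lemma step_neq x : in_domain n x -> step x != x.
Proof.
move=> Dx; apply/eqP => /ffunP/(_ i0) /=; rewrite step_i0.
have x_i0 := in_domainP Dx i0.
by have [[? ->]|[? ->]] := modz_succ_cases x_i0; lia.
Qed.

Lemma step_step_neq x : in_domain n x -> step (step x) != x.
Proof.
move=> Dx; apply/eqP => /ffunP/(_ i0) /=; rewrite !step_i0.
have x_i0 := in_domainP Dx i0.
have [[? ->]|[? ->]] := modz_succ_cases x_i0.
  have x1_i0 : 0 <= x i0 + 1 < n0 by lia.
  by have [[? ->]|[? ->]] := modz_succ_cases x1_i0; lia.
have zero_i0 : (0 : int) <= 0 < n0 by lia.
by have [[? ->]|[? ->]] := modz_succ_cases zero_i0; lia.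
Qed.

Definition jump x := ((phi (step x) - phi x) %% N)%Z.

Lemma phi_step x : in_domain n x -> phi (step x) = ((phi x + jump x) %% N)%Z.
Proof.
move=> Dx; rewrite /jump modzDmr addrC subrK modz_small //.
exact: phi_range (step_in_domain Dx).
Qed.

Lemma jump_range x : in_domain n x -> 0 < jump x < N.
Proof.
move=> Dx; have jump_nz : jump x != 0.
  apply: contraNneq (step_neq Dx) => jump0; apply/eqP/phi_inj => //.
    exact: step_in_domain.
  by rewrite phi_step // jump0 addr0 modz_small //; exact: phi_range.
have N_gt0 : 0 < N by rewrite ltz_nat.
have := modz_ge0 (phi (step x) - phi x) (lt0r_neq0 N_gt0).
have := ltz_pmod (phi (step x) - phi x) N_gt0.
by rewrite -/(jump x); lia.
Qed.

Lemma jump_not_half x y : in_domain n x -> in_domain n y -> jump x = jump y ->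
  ~ (jump x * 2 = N /\ `|phi y - phi x| * 2 = N).
Proof.
move=> Dx Dy Ejump [half_jump half_xy].
have step_xy : step x = y.
  apply: (phi_inj (step_in_domain Dx) Dy); rewrite phi_step //.
  exact: half_turn (phi_range Dx) (phi_range Dy) half_jump half_xy.
have step_yx : step y = x.
  apply: (phi_inj (step_in_domain Dy) Dx); rewrite phi_step // -Ejump.
  by apply: half_turn (phi_range Dy) (phi_range Dx) half_jump _; rewrite distrC.
by move/eqP: (step_step_neq Dx); rewrite step_xy step_yx.
Qed.

Lemma jump_collision :
  exists x y, [/\ in_domain n x, in_domain n y, phi x != phi y & jump x = jump y].
Proof.
have phi_onto (z : 'I_nm) : exists x, in_domain n x && (phi x == z%:Z).
  case: A_perm => _ _ phi_surj _.
  have [|x Dx <-] := phi_surj z; first by have := ltn_ord z; lia.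
  by exists x; rewrite eqxx andbT.
pose pre z := xchoose (phi_onto z).
have preP z : in_domain n (pre z) /\ phi (pre z) = z.
  by have /andP[? /eqP] := xchooseP (phi_onto z).
have jump_lt z : (`|jump (pre z)|%N < nm)%N by have := jump_range (preP z).1; lia.
pose jump_ord z := Ordinal (jump_lt z).
have [z1 [z2 [ne_z /(congr1 val) /= Ejump]]] :
    exists z1 z2, z1 != z2 /\ jump_ord z1 = jump_ord z2.
  apply: (@ord_fun_collision _ _ (Ordinal nm_gt0)) => z; apply/eqP => /(congr1 val) /=.
  by have := jump_range (preP z).1; lia.
exists (pre z1), (pre z2); split; try exact: (preP _).1.
  by rewrite (preP z1).2 (preP z2).2 eqz_nat.
by have := jump_range (preP z1).1; have := jump_range (preP z2).1; lia.
Qed.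

Definition place (v : {ffun 'I_k -> int}) (U Y : int) : pt k :=
  ([ffun i => if i == i0 then U else v i], Y).

Definition corner (bh : int) : {ffun 'I_k -> int} :=
  [ffun i => if i == i0 then bh else 0].

Lemma place_in_window v (U Y bh c : int) : in_domain n v ->
  bh <= U < bh + n0 -> c <= Y < c + N -> in_window n nm (corner bh) c (place v U Y).
Proof.
move=> Dv U_win Y_win; rewrite /in_window /= -!andbA Y_win andbT.
apply/forallP => i; rewrite !ffunE; case: eqP => [->|_] //.
by rewrite add0r; exact: in_domainP.
Qed.

Lemma place_dot v (U Y : int) : in_domain n v ->
  (U %% n0)%Z = v i0 -> (Y %% N)%Z = phi v -> per_ext n nm A (place v U Y).
Proof.
move=> Dv U_mod Y_mod; case: A_perm => _ _ _ A_phi; rewrite /per_ext /= Y_mod.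
have -> : [ffun i => ((place v U Y).1 i %% (n i)%:Z)%Z] = v.
  apply/ffunP => i; rewrite !ffunE; case: eqP => [->|_] //.
  by rewrite modz_small //; exact: in_domainP.
rewrite (A_phi (v, phi v)) ?eqxx // /in_box /= -andbA phi_range //.
by rewrite andbT; exact: Dv.
Qed.

Lemma place_window_dot v (U Y bh c : int) : in_domain n v ->
  bh <= U < bh + n0 -> c <= Y < c + N -> (U %% n0)%Z = v i0 -> (Y %% N)%Z = phi v ->
  window_dots n nm A (corner bh) c (place v U Y).
Proof. by move=> Dv *; rewrite /window_dots place_in_window ?place_dot. Qed.

Lemma rep_diff_in_window : exists b c, rep_diff (window_dots n nm A b c).
Proof.
have [x [y [Dx Dy ne_phi Ejump]]] := jump_collision.
have [u [u' [d [c [u_x u'_y d_jump d_nz [win_u win_ud win_u' win_u'd]]]]]] :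
    lifts_in_window N (phi x) (phi y) (jump x).
  by apply: lift_residues_in_window; rewrite ?phi_range ?jump_range //; apply: jump_not_half.
have [h [h' [e [bh [h_x h'_y e_1 _ [win_h win_he win_h' win_h'e]]]]]] :
    lifts_in_window n0 (x i0) (y i0) 1.
  by apply: lift_residues_in_window; rewrite ?in_domainP //; lia.
have step_mod (z : {ffun 'I_k -> int}) w :
    (w %% n0)%Z = z i0 -> ((w + e) %% n0)%Z = step z i0.
  by move=> w_z; rewrite step_i0 -modzDm w_z e_1.
have phi_step_mod (z : {ffun 'I_k -> int}) w : in_domain n z -> jump z = jump x ->
    (w %% N)%Z = phi z -> ((w + d) %% N)%Z = phi (step z).
  by move=> Dz jump_z w_z; rewrite phi_step // -modzDm w_z d_jump jump_z.
exists (corner bh), c, (place x h u), (place (step x) (h + e) (u + d)),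
  (place y h' u'), (place (step y) (h' + e) (u' + d)).
split; split.
- exact: place_window_dot.
- apply: place_window_dot => //; [exact: step_in_domain | exact: step_mod | exact: phi_step_mod].
- exact: place_window_dot.
- apply: place_window_dot => //; [exact: step_in_domain | exact: step_mod | exact: phi_step_mod].
- apply: contraNneq d_nz => /(congr1 snd) /= /esym/eqP.
  by rewrite -subr_eq0 addrAC subrr add0r.
- apply: contraNneq d_nz => /(congr1 snd) /= /esym/eqP.
  by rewrite -subr_eq0 addrAC subrr add0r.
- by apply: contraNneq ne_phi => /(congr1 (fun p => p.1.2)) /= u_u'; rewrite -u_x -u'_y u_u'.
- rewrite /diffv /place; congr pair => /=; last by ring.
  by apply/ffunP => i; rewrite !ffunE; case: (i == i0) => /=; [ring | rewrite !subrr].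
Qed.

End JumpCollision.

Theorem mainTheorem10 (k : nat) (n : 'I_k -> nat) (nm : nat)
  (A : {ffun 'I_k -> int} -> int -> bool) (phi : {ffun 'I_k -> int} -> int) :
  (1 <= k)%N ->
  (forall i, 2 <= n i)%N -> (2 <= nm)%N ->
  nm = (\prod_(i < k) n i)%N ->
  ~~ odd nm ->
  perm_array_by n nm A phi ->
  theta n < (nm%:R - 2) / (2 * nm%:R) ->
  (exists b c, rep_diff (window_dots n nm A b c)) /\
  (costas_dots n nm A -> ~ periodic_costas n nm A).
Proof.
move=> _ n_ge2 nm_ge2 nmE _ A_perm theta_lt.
have [i0 n_i0_ge3] := exists_dim_ge3_of_theta n_ge2 nmE theta_lt.
have [b [c rep_bc]] := rep_diff_in_window n_i0_ge3 (ltnW nm_ge2) A_perm.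
by split=> [|_ periodic]; [exists b, c | exact: periodic rep_bc].
Qed.
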